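(* Consider the downtown bathtub model described in the context, with a fixed number $N_s>0$ of suburban commuters, and let $C_s^{b*}$ be the equilibrium bathtub cost of a short-run equilibrium. Put $\theta \equiv \frac{C_s^{b*} v_f}{\alpha L}$. Then (i) $\theta$ satisfies $$F(\theta)\equiv N_s-\alpha n_j\left(\frac{1}{\beta}+\frac{1}{\gamma}\right)\left(\ln\theta+\frac{1}{\theta}-1\right)=0;$$ (ii) hypercongestion exists at the equilibrium if $\theta>2$.
   Context: Downtown traffic (bathtub model): the vehicle accumulation $n(t)\ge 0$ in the downtown area at time $t$ evolves as $\dot n(t)=I(t)-G(t)$, where $I(t)$ is the inflow and $G(t)=n(t)v(t)/L$ is the outflow, $L>0$ is the (common) trip length in the downtown area, and the space-mean speed follows the Greenshields law $v(t)=v_f\left(1-\frac{n(t)}{n_j}\right)$ with free-flow speed $v_f>0$ and jam accumulation $n_j>0$. The downtown travel time of a commuter arriving at work at time $t$ is $T(t)=L/v(t)$. A suburban commuter who arrives at work at time $t$ incurs the bathtub cost $C_s^b(t)=\alpha T(t)+s(t)$, where $s(t)=\beta(t^*-t)$ if $t\le t^*$ and $s(t)=\gamma(t-t^* )$ if $t>t^*$; here $\alpha,\beta,\gamma>0$ are the marginal costs of travel time, earliness and lateness, and $t^*$ is the desired arrival time. A short-run equilibrium (with $N_s$ fixed) is an accumulation path $n(\cdot)$ together with a number $C_s^{b*}$ such that $C_s^b(t)=C_s^{b*}$ for all $t$ with $n(t)>0$, $C_s^b(t)\ge C_s^{b*}$ for all $t$ with $n(t)=0$, and $\int_{\mathbb{R}}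 \frac{n(t)v(t)}{L}\,dt=N_s$. Hypercongestion means that the accumulation exceeds the critical accumulation $n_j/2$ (the accumulation maximizing the outflow $n v/L$) at some time. *)

From HB Require Import structures.
From mathcomp Require Import all_boot all_order all_algebra.
From mathcomp Require Import all_classical all_reals all_analysis.
Set Implicit Arguments. Unset Strict Implicit. Unset Printing Implicit Defensive.
Import Order.TTheory GRing.Theory Num.Theory.
Local Open Scope classical_set_scope.
Local Open Scope ring_scope.

Definition speed {R : realType} (vf nj x : R) : R := vf * (1 - x / nj).

Definition sched {R : realType} (beta gamma tstar t : R) : R :=
  if t <= tstar then beta * (tstar - t) else gamma * (t - tstar).

Definition travel_time {R : realType} (L vf nj : R) (n : R -> R) (t : R) : R :=
  L / speed vf nj (n t).

Definition bathtub_cost {R : realType} (alpha beta gamma tstar L vf nj : R)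
  (n : R -> R) (t : R) : R :=
  alpha * travel_time L vf nj n t + sched beta gamma tstar t.

Definition outflow {R : realType} (L vf nj : R) (n : R -> R) (t : R) : R :=
  n t * speed vf nj (n t) / L.

Definition short_run_equilibrium {R : realType}
  (alpha beta gamma tstar L vf nj Ns : R) (n : R -> R) (Cstar : R) : Prop :=
  [/\ (forall t, 0 <= n t),
      (forall t, 0 < n t -> bathtub_cost alpha beta gamma tstar L vf nj n t = Cstar),
      (forall t, n t = 0 -> Cstar <= bathtub_cost alpha beta gamma tstar L vf nj n t)
    & (\int[@lebesgue_measure R]_(t in [set: R]) (outflow L vf nj n t)%:E
         = Ns%:E)%E].

(* hypercongestion: accumulation exceeds critical accumulation n_j/2 at some time *)
Definition hypercongestion {R : realType} (nj : R) (n : R -> R) : Prop :=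
  exists t, nj / 2 < n t.

Definition Fbath {R : realType} (alpha beta gamma nj Ns theta : R) : R :=
  Ns - alpha * nj * (1 / beta + 1 / gamma) * (ln theta + 1 / theta - 1).

(* In equilibrium every traveller pays C*, so the travel-time ratio u = v_f / v equals
   max(1, θ - k s(t)) with k = v_f / (α L): a tent in t, peaking at θ at t*, and equal to
   1 outside the rush hour [t* - (θ-1)/(kβ), t* + (θ-1)/(kγ)].  Greenshields' law turns
   this into n = n_j (1 - 1/u) and the outflow (n_j v_f / L) (u - 1) / u^2.  On each side
   of t* the tent is affine, so the outflow integrates in closed form with the primitive
   ln u + 1/u, and N_s = α n_j (1/β + 1/γ) (ln θ + 1/θ - 1).  Nobody travels unless
   θ > 1, and at t* the accumulation n_j (1 - 1/θ) exceeds n_j / 2 when θ > 2. *)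

From HB Require Import structures.
From mathcomp Require Import all_boot all_order all_algebra.
From mathcomp Require Import all_classical all_reals all_analysis.
From mathcomp Require Import ring lra measurable_realfun.
Import Order.TTheory GRing.Theory Num.Theory.
Import numFieldNormedType.Exports.
Local Open Scope ring_scope.
Local Open Scope classical_set_scope.

Section affine_substitution.
Context {R : realType}.
Notation mu := (@lebesgue_measure R).

Lemma is_derive_affine (p q t : R) : is_derive t 1 (fun s => p + q * s) q.
Proof.
have := is_deriveD (is_derive_cst p t 1) (is_deriveZ q (is_derive_id t (1 : R))).
by rewrite add0r /GRing.scale /= mulr1.
Qed.

Lemma continuous_affine (p q : R) : continuous (fun s => p + q * s).
Proof.
move=> t; have [dt _] := is_derive_affine p q t.
by apply/differentiable_continuous; rewrite -derivable1_diffP.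
Qed.

Lemma integral_comp_affine (f F : R -> R) (p q a b : R) : a < b -> q != 0 ->
  (forall t, a <= t <= b -> is_derive (p + q * t) 1 F (f (p + q * t))) ->
  (forall t, a <= t <= b -> {for p + q * t, continuous f}) ->
  (\int[mu]_(t in `[a, b]) (f (p + q * t))%:E =
     ((F (p + q * b) - F (p + q * a)) / q)%:E)%E.
Proof.
move=> ab q0 dF cf.
pose G := q^-1 \*: (F \o (fun s => p + q * s)).
have dG t : a <= t <= b -> is_derive t 1 G (f (p + q * t)).
  move=> tab; have := is_deriveZ q^-1
    (@is_derive1_comp _ F (fun s => p + q * s) t _ _ (dF t tab) (is_derive_affine p q t)).
  move/is_derive_eq; apply.
  by rewrite -[_ *: _]/(q^-1 * (_ * q)) mulrC mulfK.
have derivable_G t : a <= t <= b -> derivable G t 1 by move=> /dG [].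
have cG t : a <= t <= b -> {for t, continuous G}.
  by move=> /derivable_G dGt; apply/differentiable_continuous; rewrite -derivable1_diffP.
have -> : (F (p + q * b) - F (p + q * a)) / q = G b - G a.
  by rewrite mulrC mulrBr.
rewrite EFinB; apply: continuous_FTC2.
- exact: ab.
- apply/continuous_in_subspaceT => t; rewrite inE /= in_itv /= => tab.
  exact: continuous_comp (continuous_affine p q t) (cf t tab).
- split.
  + by move=> t; rewrite in_itv /= => /andP[ta tb]; apply: derivable_G; rewrite !ltW.
  + by apply: cvg_at_right_filter; apply: cG; rewrite lexx ltW.
  + by apply: cvg_at_left_filter; apply: cG; rewrite lexx ltW.
- move=> t; rewrite in_itv /= => /andP[ta tb].
  by rewrite derive1E; apply: derive_val; apply: dG; rewrite !ltW.
Qed.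
End affine_substitution.

Section ratio_flow.
Context {R : realType}.

(* The outflow, in units of n_j v_f / L, as a function of the travel-time ratio
   u = v_f / v: Greenshields' law gives n = n_j (1 - 1/u). *)
Definition ratio_flow (x : R) : R := (x - 1) / x ^+ 2.

Definition ratio_flow_primitive (x : R) : R := ln x + x^-1.

Lemma ratio_flow1 : ratio_flow 1 = 0.
Proof. by rewrite /ratio_flow subrr mul0r. Qed.

Lemma ratio_flow_primitive1 : ratio_flow_primitive 1 = 1.
Proof. by rewrite /ratio_flow_primitive ln1 invr1 add0r. Qed.

Lemma is_derive_ratio_flow_primitive (x : R) :
  0 < x -> is_derive x 1 ratio_flow_primitive (ratio_flow x).
Proof.
move=> x_gt0; have x_neq0 : x != 0 by rewrite gt_eqF.
have := is_deriveD (is_derive1_ln x_gt0) (is_deriveV x_neq0 (is_derive_id x 1)).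
move/is_derive_eq; apply.
by rewrite /ratio_flow -[_ *: _]/(- x ^- 2 * 1); field.
Qed.

Lemma continuous_ratio_flow (x : R) : x != 0 -> {for x, continuous ratio_flow}.
Proof.
move=> x_neq0; apply: continuousM.
  by apply: continuousB; [exact: cvg_id | exact: cst_continuous].
apply: continuousV; first by rewrite expf_neq0.
by apply: continuousM; exact: cvg_id.
Qed.
End ratio_flow.

Section schedule_delay.
Context {R : realType}.

Lemma mulr_sched (k b g t0 t : R) : k * sched b g t0 t = sched (k * b) (k * g) t0 t.
Proof. by rewrite /sched; case: ifP => _; rewrite mulrA. Qed.

Lemma sched_max (b g t0 t : R) : 0 <= b -> 0 <= g ->
  sched b g t0 t = Num.max (b * (t0 - t)) (g * (t - t0)).
Proof.
move=> b_ge0 g_ge0; rewrite /sched; case: (leP t t0) => [t_le_t0 | t0_lt_t].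
  rewrite max_l //; apply: (@le_trans _ _ 0); last by rewrite mulr_ge0 // subr_ge0.
  by rewrite mulr_ge0_le0 // subr_le0.
rewrite max_r //; apply: (@le_trans _ _ 0).
  by rewrite mulr_ge0_le0 // subr_le0 ltW.
by rewrite mulr_ge0 // subr_ge0 ltW.
Qed.

Lemma sched_ge0 (b g t0 t : R) : 0 <= b -> 0 <= g -> 0 <= sched b g t0 t.
Proof.
move=> b_ge0 g_ge0; rewrite /sched.
by case: (leP t t0) => [t_le_t0 | /ltW t0_le_t]; rewrite mulr_ge0 // subr_ge0.
Qed.

Lemma continuous_sched (b g t0 : R) : 0 <= b -> 0 <= g -> continuous (sched b g t0).
Proof.
move=> b_ge0 g_ge0 t.
rewrite (_ : sched b g t0 = (fun s => (b * t0) + (- b) * s) \max (fun s => (- g * t0) + g * s)).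
  by apply: continuous_max; exact: continuous_affine.
by apply/funext => s; rewrite sched_max //=; congr Num.max; ring.
Qed.
End schedule_delay.

Section tent_integral.
Context {R : realType}.
Notation mu := (@lebesgue_measure R).
Variables (f F : R -> R) (theta b g t0 : R).
Hypotheses (theta_gt1 : 1 < theta) (b_gt0 : 0 < b) (g_gt0 : 0 < g).
Hypotheses (f1 : f 1 = 0) (dF : forall x : R, 1 <= x -> is_derive x 1 F (f x))
  (cf : forall x : R, 1 <= x -> {for x, continuous f}).

Let tent t := Num.max 1 (theta - sched b g t0 t).
Let l := t0 - (theta - 1) / b.
Let r := t0 + (theta - 1) / g.

Let left_width : b * (t0 - l) = theta - 1.
Proof. by rewrite /l opprB addrC subrK mulrC divfK ?gt_eqF. Qed.

Let right_width : g * (r - t0) = theta - 1.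
Proof. by rewrite /r (addrC t0) addrK mulrC divfK ?gt_eqF. Qed.

Let l_lt_t0 : l < t0.
Proof. by rewrite /l ltrBlDr ltrDl divr_gt0 // subr_gt0. Qed.

Let t0_lt_r : t0 < r.
Proof. by rewrite /r ltrDl divr_gt0 // subr_gt0. Qed.

Let tent_ge1 t : 1 <= tent t.
Proof. by rewrite le_max lexx. Qed.

Let tent_left t : l <= t <= t0 -> tent t = (theta - b * t0) + b * t.
Proof.
move=> /andP[l_le_t t_le_t0]; rewrite /tent /sched t_le_t0 max_r.
  by ring.
have : b * (t0 - t) <= b * (t0 - l) by rewrite ler_pM2l // lerD2l lerN2.
rewrite left_width; lra.
Qed.

Let tent_right t : t0 <= t <= r -> tent t = (theta + g * t0) + (- g) * t.
Proof.
move=> /andP[t0_le_t t_le_r]; rewrite /tent /sched.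
case: ifPn => [t_le_t0 | _]; last rewrite max_r.
- have -> : t = t0 by apply/eqP; rewrite eq_le t_le_t0 t0_le_t.
  by rewrite subrr mulr0 subr0 max_r ?ltW //; ring.
- by ring.
have : g * (t - t0) <= g * (r - t0) by rewrite ler_pM2l // lerD2r.
rewrite right_width; lra.
Qed.

Let tent_outside t : ~~ (l <= t <= r) -> tent t = 1.
Proof.
rewrite negb_and -!ltNge => /orP[t_lt_l | r_lt_t]; rewrite /tent /sched.
  rewrite ifT; last by rewrite ltW // (lt_trans t_lt_l).
  have : b * (t0 - l) <= b * (t0 - t) by rewrite ler_pM2l // lerD2l lerN2 ltW.
  rewrite left_width => ?; rewrite max_l //; lra.
rewrite ifF; last by apply/negbTE; rewrite -ltNge (lt_trans t0_lt_r).
have : g * (r - t0) <= g * (t - t0) by rewrite ler_pM2l // lerD2r ltW.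
rewrite right_width => ?; rewrite max_l //; lra.
Qed.

Let tent_peak : tent t0 = theta.
Proof. by rewrite /tent /sched lexx subrr mulr0 subr0 max_r ?ltW. Qed.

Let tent_l : tent l = 1.
Proof. by rewrite /tent /sched ltW // left_width opprB addrC subrK maxxx. Qed.

Let tent_r : tent r = 1.
Proof. by rewrite /tent /sched leNgt t0_lt_r /= right_width opprB addrC subrK maxxx. Qed.

Let continuous_f_tent : continuous (f \o tent).
Proof.
move=> t; apply: continuous_comp; last exact: cf.
apply: continuous_max; first exact: cst_continuous.
apply: continuousB; first exact: cst_continuous.
by apply: continuous_sched; rewrite ltW.
Qed.

Lemma integral_tent :
  (\int[mu]_(t in [set: R]) (f (Num.max 1 (theta - sched b g t0 t)))%:E =
     ((1 / b + 1 / g) * (F theta - F 1))%:E)%E.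
Proof.
have m_ftent (D : set R) : measurable_fun D (EFin \o (f \o tent)).
  apply/measurable_EFinP; apply: (measurable_funS measurableT) => //.
  exact: continuous_measurable_fun.
transitivity (\int[mu]_(t in `[l, r]) (f (tent t))%:E)%E.
  rewrite [RHS]integral_mkcond; apply: eq_integral => t _; rewrite patchE.
  case: ifPn => // t_out; rewrite -/(tent t) tent_outside ?f1 //.
  by move: t_out; apply: contraNN; rewrite inE /= in_itv.
rewrite (@itv_bndbnd_setU _ _ _ (BRight t0)) ?bnd_simp ?ltW //.
rewrite integral_setU //=; last 2 first.
- exact: m_ftent.
- apply/disj_setPS => x [] /=; rewrite !in_itv /= => /andP[_ x_le] /andP[x_gt _].
  by move: (le_lt_trans x_le x_gt); rewrite ltxx.
rewrite integral_itv_obnd_cbnd //.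
have left_piece : (\int[mu]_(t in `[l, t0]) (f (tent t))%:E =
    ((F theta - F 1) / b)%:E)%E.
  transitivity (\int[mu]_(t in `[l, t0]) (f ((theta - b * t0) + b * t))%:E)%E.
    by apply: eq_integral => t; rewrite inE /= in_itv /= => /tent_left ->.
  apply: eq_trans (integral_comp_affine f F _ _ _ _ l_lt_t0 (lt0r_neq0 b_gt0) _ _) _.
  - by move=> t /tent_left <-; exact/dF/tent_ge1.
  - by move=> t /tent_left <-; exact/cf/tent_ge1.
  - by rewrite -!tent_left ?lexx ?ltW // tent_peak tent_l.
have right_piece : (\int[mu]_(t in `[t0, r]) (f (tent t))%:E =
    ((F theta - F 1) / g)%:E)%E.
  transitivity (\int[mu]_(t in `[t0, r]) (f ((theta + g * t0) + (- g) * t))%:E)%E.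
    by apply: eq_integral => t; rewrite inE /= in_itv /= => /tent_right ->.
  have Ng_neq0 : - g != 0 by rewrite oppr_eq0 gt_eqF.
  apply: eq_trans (integral_comp_affine f F _ _ _ _ t0_lt_r Ng_neq0 _ _) _.
  - by move=> t /tent_right <-; exact/dF/tent_ge1.
  - by move=> t /tent_right <-; exact/cf/tent_ge1.
  - rewrite -!tent_right ?lexx ?ltW // tent_peak tent_r.
    by rewrite invrN mulrN -mulNr opprB.
by rewrite left_piece right_piece -EFinD; congr EFin; ring.
Qed.
End tent_integral.

Section short_run_equilibrium.
Context {R : realType}.
Notation mu := (@lebesgue_measure R).
Variables (alpha beta gamma tstar L vf nj Ns Cstar : R) (n : R -> R).
Hypotheses (alpha_gt0 : 0 < alpha) (beta_gt0 : 0 < beta) (gamma_gt0 : 0 < gamma).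
Hypotheses (L_gt0 : 0 < L) (vf_gt0 : 0 < vf) (nj_gt0 : 0 < nj) (Ns_gt0 : 0 < Ns).
Hypothesis n_lt_nj : forall t, n t < nj.
Hypothesis equilibrium : short_run_equilibrium alpha beta gamma tstar L vf nj Ns n Cstar.

Let k := vf / (alpha * L).
Let theta := Cstar * vf / (alpha * L).
(* The travel-time ratio v_f / v(t) = T(t) v_f / L imposed by the equilibrium condition. *)
Let tent t := Num.max 1 (theta - sched (k * beta) (k * gamma) tstar t).

Let k_gt0 : 0 < k.
Proof. by rewrite divr_gt0 // mulr_gt0. Qed.

Let tent_ge1 t : 1 <= tent t.
Proof. by rewrite le_max lexx. Qed.

Let tent_peak : 1 < theta -> tent tstar = theta.
Proof. by move=> theta_gt1; rewrite /tent /sched lexx subrr mulr0 subr0 max_r ?ltW. Qed.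

Let theta_sub_sched t :
  theta - sched (k * beta) (k * gamma) tstar t = k * (Cstar - sched beta gamma tstar t).
Proof. by rewrite -mulr_sched /theta /k; ring. Qed.

Lemma equilibrium_accumulation t : n t = nj * (1 - (tent t)^-1).
Proof.
have [n_ge0 cost_eq cost_ge _] := equilibrium.
rewrite /tent theta_sub_sched.
have [nt0 | nt_gt0] := eqVneq (n t) 0.
  have := cost_ge t nt0.
  rewrite /bathtub_cost /travel_time /speed nt0 mul0r subr0 mulr1 => cost_free.
  rewrite max_l ?invr1 ?subrr ?mulr0 //.
  have -> : 1 = k * (alpha * (L / vf)) by rewrite /k; field; rewrite !gt_eqF.
  by rewrite ler_pM2l // lerBlDr.
have nt_pos : 0 < n t by rewrite lt0r nt_gt0 n_ge0.
have := cost_eq t nt_pos; rewrite /bathtub_cost /travel_time /speed.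
set w := 1 - n t / nj => cost_congested.
have w_gt0 : 0 < w by rewrite subr_gt0 ltr_pdivrMr // mul1r.
have w_lt1 : w < 1 by rewrite ltrBlDr ltrDl divr_gt0.
have -> : k * (Cstar - sched beta gamma tstar t) = w^-1.
  by rewrite -cost_congested /k; field; rewrite !gt_eqF.
rewrite max_r; last by rewrite invf_ge1 // ltW.
by rewrite invrK /w; field; rewrite gt_eqF.
Qed.

Lemma equilibrium_outflow t : outflow L vf nj n t = (nj * vf / L) * ratio_flow (tent t).
Proof.
have tent_neq0 : tent t != 0 by rewrite gt_eqF // (lt_le_trans ltr01 (tent_ge1 t)).
rewrite /outflow /speed equilibrium_accumulation /ratio_flow.
by field; rewrite tent_neq0 !gt_eqF.
Qed.

Let total_outflow :
  (\int[mu]_(t in [set: R]) ((nj * vf / L) *: ratio_flow (tent t))%:E = Ns%:E)%E.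
Proof.
have [_ _ _ <-] := equilibrium.
by apply: eq_integral => t _; rewrite equilibrium_outflow.
Qed.

Lemma equilibrium_theta_gt1 : 1 < theta.
Proof.
rewrite ltNge; apply/negP => theta_le1.
have flow0 t : (nj * vf / L) *: ratio_flow (tent t) = 0.
  rewrite /tent max_l ?ratio_flow1 ?scaler0 //.
  by rewrite lerBlDr (le_trans theta_le1) // lerDl sched_ge0 // mulr_ge0 // ltW.
move: total_outflow; under eq_integral do rewrite flow0.
by rewrite integral0 => /esym/eqP; rewrite eqe gt_eqF.
Qed.

Lemma equilibrium_hypercongestion : 2 < theta -> hypercongestion nj n.
Proof.
move=> theta_gt2; have theta_gt1 : 1 < theta by rewrite (lt_trans _ theta_gt2) ?ltr1n.
have theta_gt0 : 0 < theta by rewrite (lt_trans ltr01).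
exists tstar; rewrite equilibrium_accumulation tent_peak // -subr_gt0.
have -> : nj * (1 - theta^-1) - nj / 2 = nj * (theta - 2) / (2 * theta).
  by field; rewrite gt_eqF.
by apply: divr_gt0; apply: mulr_gt0; rewrite // subr_gt0.
Qed.

Lemma equilibrium_Fbath : Fbath alpha beta gamma nj Ns theta = 0.
Proof.
set K := nj * vf / L.
have x_gt0 (x : R) : 1 <= x -> 0 < x by exact: lt_le_trans ltr01.
have f1 : (K \*: ratio_flow) 1 = 0 by rewrite /= ratio_flow1 scaler0.
have dF (x : R) : 1 <= x -> is_derive x 1 (K \*: ratio_flow_primitive) ((K \*: ratio_flow) x).
  by move=> /x_gt0 x_pos; apply/is_deriveZ/is_derive_ratio_flow_primitive.
have cf (x : R) : 1 <= x -> {for x, continuous (K \*: ratio_flow)}.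
  move=> /x_gt0/lt0r_neq0 x_neq0.
  by apply: continuousZ; [exact: cst_continuous | exact: continuous_ratio_flow].
have := eq_trans (esym total_outflow) (integral_tent _ _ _ _ _ _ equilibrium_theta_gt1
  (mulr_gt0 k_gt0 beta_gt0) (mulr_gt0 k_gt0 gamma_gt0) f1 dF cf).
move=> [->]; rewrite /= ratio_flow_primitive1 /Fbath /ratio_flow_primitive /K /k.
have theta_gt0 := x_gt0 _ (ltW equilibrium_theta_gt1).
by rewrite /GRing.scale /=; field; rewrite !gt_eqF.
Qed.

End short_run_equilibrium.

Theorem lemma1 (R : realType) (alpha beta gamma tstar L vf nj Ns Cstar : R)
  (n : R -> R) :
  0 < alpha -> 0 < beta -> 0 < gamma -> 0 < L -> 0 < vf -> 0 < nj -> 0 < Ns ->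
  (forall t, n t < nj) ->
  short_run_equilibrium alpha beta gamma tstar L vf nj Ns n Cstar ->
  let theta := Cstar * vf / (alpha * L) in
  Fbath alpha beta gamma nj Ns theta = 0 /\
  (2 < theta -> hypercongestion nj n).
Proof.
move=> alpha_gt0 beta_gt0 gamma_gt0 L_gt0 vf_gt0 nj_gt0 Ns_gt0 n_lt_nj equilibrium theta.
split; first by apply: (equilibrium_Fbath _ _ _ tstar _ _ _ _ _ n).
by apply: (equilibrium_hypercongestion _ beta gamma tstar _ _ _ Ns).
Qed.
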